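(* Let $s\ge2$ and $l_1,\dots,l_s$ be positive integers with $\sum_{i=1}^s l_i\ge 3$. Then the graph $P_{l_1}\uplus P_{l_2}\uplus\cdots\uplus P_{l_s}\uplus K_1$ has a dispersed $4$-placement.
   Context: $P_m$ is the path on $m$ vertices, $K_1$ a single vertex, and $\uplus$ denotes vertex-disjoint union. For a graph $H$ on $m$ vertices, a $k$-placement of $H$ is a $k$-tuple $(\phi_1,\dots,\phi_k)$ of bijections $\phi_i:V(H)\to V(K_m)$ with pairwise disjoint edge sets $\phi_i(E(H))=\{\phi_i(x)\phi_i(y):xy\in E(H)\}$; it is dispersed if $\phi_i(v)\ne\phi_j(v)$ for every vertex $v$ and all $i\ne j$. *)

From mathcomp Require Import all_boot perm.
Set Implicit Arguments. Unset Strict Implicit. Unset Printing Implicit Defensive.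

(* A (simple) graph on vertex set {0,...,n-1}, given by its vertex count and
   a list of edges (pairs of vertex numbers, read as unordered pairs). *)
Record graph := Graph { gV : nat; gE : seq (nat * nat) }.

Definition path_graph (l : nat) : graph :=
  Graph l [seq (i, i.+1) | i <- iota 0 l.-1].

Definition K1 : graph := Graph 1 [::].

Definition dunion (G1 G2 : graph) : graph :=
  Graph (gV G1 + gV G2)
        (gE G1 ++ [seq (e.1 + gV G1, e.2 + gV G1) | e <- gE G2]).

Definition paths_plus_K1 (ls : seq nat) : graph :=
  foldr dunion K1 (map path_graph ls).

Definition adj (G : graph) (x y : 'I_(gV G)) : bool :=
  ((nat_of_ord x, nat_of_ord y) \in gE G) || ((nat_of_ord y, nat_of_ord x) \in gE G).

(* phi(E(G)) as a set of unordered pairs of vertices of K_m, m = |V(G)| *)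
Definition edge_image (G : graph) (phi : {perm 'I_(gV G)}) : {set {set 'I_(gV G)}} :=
  [set [set phi x; phi y] | x in 'I_(gV G), y in 'I_(gV G) & @adj G x y].

Definition placement (G : graph) (k : nat) (phi : 'I_k -> {perm 'I_(gV G)}) : Prop :=
  forall i j : 'I_k, i != j -> [disjoint edge_image (phi i) & edge_image (phi j)].

Definition dispersed (G : graph) (k : nat) (phi : 'I_k -> {perm 'I_(gV G)}) : Prop :=
  forall (i j : 'I_k) (v : 'I_(gV G)), i != j -> phi i v != phi j v.

(* The vertices of P_{l_1} ⊎ ... ⊎ P_{l_s} ⊎ K_1 are numbered consecutively, so
   all its edges are edges {v, v+1} of the path P_m on the same m = l_1 + ... + l_s + 1
   vertices, and a dispersed placement of any supergraph on these vertices will do.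
   For m >= 8 take the zigzag numbering z(2i) = -i, z(2i+1) = i+1 (mod m) of P_m and
   its rotations z + k, k < 4: every path edge is sent to a pair with sum 2k or 2k+1
   (mod m), so distinct rotations share no edge, and they move every vertex.  For
   4 <= m <= 7 the graph lies inside P_{l_1} ⊎ P_{m-1-l_1} ⊎ K_1, and these fourteen
   graphs are given explicit placements checked by computation. *)

From mathcomp Require Import all_boot perm zify.
Set Implicit Arguments. Unset Strict Implicit. Unset Printing Implicit Defensive.

Lemma eq_set2 (T : finType) (p q r s : T) :
  [set p; q] = [set r; s] -> (p = r /\ q = s) \/ (p = s /\ q = r).
Proof.
move=> E.
have hp : p \in [set r; s] by rewrite -E !inE eqxx.
have hq : q \in [set r; s] by rewrite -E !inE eqxx orbT.
have hr : r \in [set p; q] by rewrite E !inE eqxx.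
have hs : s \in [set p; q] by rewrite E !inE eqxx orbT.
rewrite !inE in hp hq hr hs.
by case/orP: hp => /eqP ?; case/orP: hq => /eqP ?; case/orP: hr => /eqP ?;
  case/orP: hs => /eqP ?; subst; auto.
Qed.

Definition upair_eq (p q : nat * nat) : bool := (p == q) || (p == (q.2, q.1)).

Lemma upair_eq_sum p q : upair_eq p q -> p.1 + p.2 = q.1 + q.2.
Proof. by case/orP=> /eqP ->; rewrite // addnC. Qed.

(* [f k v] is the image of vertex [v] under the [k]-th bijection. *)
Record dispersed_labelling (G : graph) (K : nat) (f : nat -> nat -> nat) : Prop :=
  DispersedLabelling {
    labelling_lt : forall k v, k < K -> v < gV G -> f k v < gV G;
    labelling_inj : forall k u v, k < K -> u < gV G -> v < gV G ->
      f k u = f k v -> u = v;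
    labelling_dispersed : forall k j v, k < K -> j < K -> k != j -> v < gV G ->
      f k v != f j v;
    labelling_edge : forall k j e e', k < K -> j < K -> k != j ->
      e \in gE G -> e' \in gE G -> ~~ upair_eq (f k e.1, f k e.2) (f j e'.1, f j e'.2)
  }.

Lemma edge_imageP (G : graph) (phi : {perm 'I_(gV G)}) S :
  S \in edge_image phi ->
  exists x y : 'I_(gV G), (val x, val y) \in gE G /\ S = [set phi x; phi y].
Proof.
case/imset2P=> x y _; rewrite inE => /orP[] exy ->; first by exists x, y.
by exists y, x; rewrite setUC.
Qed.

Section LabellingToPlacement.
Variables (G : graph) (K : nat) (f : nat -> nat -> nat).
Hypothesis fG : dispersed_labelling G K f.

Let f_ord (k : 'I_K) (x : 'I_(gV G)) : 'I_(gV G) :=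
  Ordinal (labelling_lt fG (ltn_ord k) (ltn_ord x)).

Let f_ord_inj k : injective (f_ord k).
Proof.
move=> x y /(congr1 val) /= /(labelling_inj fG (ltn_ord k) (ltn_ord x) (ltn_ord y)).
exact: val_inj.
Qed.

Lemma dispersed_placement_of_labelling :
  exists phi : 'I_K -> {perm 'I_(gV G)}, placement phi /\ dispersed phi.
Proof.
exists (fun k => perm (@f_ord_inj k)); split=> [i j ij | i j v ij].
- apply/pred0P=> S /=; apply/negP=> /andP[/edge_imageP[x [y [exy ->]]]].
  case/edge_imageP=> x' [y' [exy' /eq_set2]]; rewrite !permE.
  have /negP not_same := labelling_edge fG (ltn_ord i) (ltn_ord j) ij exy exy'.
  by case=> -[/(congr1 val) /= fx /(congr1 val) /= fy]; apply: not_same;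
    rewrite /upair_eq /= fx fy !eqxx ?orbT.
- by rewrite !permE; apply/eqP=> /(congr1 val) /=; apply/eqP/(labelling_dispersed fG).
Qed.

End LabellingToPlacement.

Lemma dispersed_labelling_sub (G H : graph) K f :
  gV G = gV H -> {subset gE G <= gE H} ->
  dispersed_labelling H K f -> dispersed_labelling G K f.
Proof.
move=> eqV subE [f_lt f_inj f_disp f_edge]; split; rewrite ?eqV //.
by move=> k j e e' hk hj kj /subE he /subE he'; apply: f_edge.
Qed.

Lemma mem_path_graph_edge n e :
  (e \in gE (path_graph n)) = (e.2 == e.1.+1) && (e.1.+1 < n).
Proof.
case: e => a b /=; apply/mapP/andP=> [[i] | [/eqP -> ha]].
  by rewrite mem_iota => /andP[_ hi] [-> ->]; split=> //; lia.
by exists a => //; rewrite mem_iota; lia.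
Qed.

Lemma path_graph_edge_sub m n :
  m <= n -> {subset gE (path_graph m) <= gE (path_graph n)}.
Proof.
by move=> mn e; rewrite !mem_path_graph_edge => /andP[-> /leq_trans->].
Qed.

Lemma gV_paths_plus_K1 ls : gV (paths_plus_K1 ls) = (sumn ls).+1.
Proof. by elim: ls => //= l ls ->; rewrite addnS. Qed.

Lemma paths_plus_K1_edge_sub ls :
  {subset gE (paths_plus_K1 ls) <= gE (path_graph (sumn ls))}.
Proof.
elim: ls => [|l ls IH] //= e; rewrite mem_cat => /orP[|/mapP[[a b] /IH]].
  by apply: path_graph_edge_sub; rewrite leq_addr.
rewrite !mem_path_graph_edge => /andP[/eqP /= -> hb] -> /=.
by rewrite addSn eqxx /=; lia.
Qed.

Lemma paths_plus_K1_sub_two_paths l ls :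
  {subset gE (paths_plus_K1 (l :: ls)) <= gE (paths_plus_K1 [:: l; sumn ls])}.
Proof.
move=> e; rewrite /= !mem_cat cats0 => /orP[-> // | /mapP[e' he' ->]].
apply/orP; right; apply: map_f.
exact: paths_plus_K1_edge_sub.
Qed.

(* [m - i] stands for [-i] modulo [m]. *)
Definition zigzag_base (m v : nat) : nat := if odd v then v./2.+1 else m - v./2.

Definition zigzag (m k v : nat) : nat := (k + zigzag_base m v) %% m.

Lemma zigzag_baseE m v : exists i,
  v = i.*2 /\ zigzag_base m v = m - i \/ v = i.*2.+1 /\ zigzag_base m v = i.+1.
Proof.
exists v./2; rewrite /zigzag_base; have := odd_double_half v.
by case: (odd v) => /= E; [right | left]; split; lia.
Qed.

Lemma zigzag_base_sum m a :
  a < m -> zigzag_base m a + zigzag_base m a.+1 = m + ~~ odd a.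
Proof.
rewrite /zigzag_base /= uphalf_half; have := odd_double_half a.
by case: (odd a) => /= E ha; lia.
Qed.

Lemma zigzagE m k v : k < m -> v < m ->
  let p := k + zigzag_base m v in
  p < m /\ zigzag m k v = p \/ m <= p /\ zigzag m k v = p - m.
Proof.
move=> hk hv p; have [i Ez] := zigzag_baseE m v; rewrite /zigzag -/p.
case: (ltnP p m) => hp; first by left; rewrite modn_small.
right; split=> //; rewrite -(subnK hp) modnDr modn_small //; lia.
Qed.

Lemma zigzag_lt m k v : 0 < m -> zigzag m k v < m.
Proof. exact: ltn_pmod. Qed.

Lemma zigzag_inj m k u v : k < m -> u < m -> v < m ->
  zigzag m k u = zigzag m k v -> u = v.
Proof.
move=> hk hu hv; have [i Eu] := zigzag_baseE m u; have [i' Ev] := zigzag_baseE m v.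
have := zigzagE hk hu; have := zigzagE hk hv; lia.
Qed.

Lemma zigzag_dispersed m k j v : k < m -> j < m -> k != j ->
  zigzag m k v != zigzag m j v.
Proof. by move=> hk hj; rewrite /zigzag eqn_modDr !modn_small. Qed.

Lemma zigzag_edge_sum m k a : a < m ->
  zigzag m k a + zigzag m k a.+1 = k.*2 + ~~ odd a %[mod m].
Proof.
by move=> ha; rewrite modnDm addnACA zigzag_base_sum // addnn addnCA modnDl.
Qed.

Lemma zigzag_edge_disjoint m k j a c : k.*2.+1 < m -> j.*2.+1 < m -> k != j ->
  a < m -> c < m ->
  ~~ upair_eq (zigzag m k a, zigzag m k a.+1) (zigzag m j c, zigzag m j c.+1).
Proof.
move=> hk hj kj ha hc; apply/negP=> /upair_eq_sum /= /(congr1 (modn^~ m)).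
by rewrite !zigzag_edge_sum // !modn_small; move: kj; case: (odd a); case: (odd c); lia.
Qed.

Lemma zigzag_labelling m K :
  K.*2 <= m -> dispersed_labelling (path_graph m) K (zigzag m).
Proof.
move=> hK; split=> /= [k v _ hv | k u v hk | k j v hk hj kj _ | k j [a b] [c d] hk hj kj].
- by rewrite zigzag_lt // (leq_ltn_trans _ hv).
- by apply: zigzag_inj; lia.
- by apply: zigzag_dispersed kj; lia.
- rewrite !mem_path_graph_edge => /andP[/eqP /= -> ha] /andP[/eqP /= -> hc].
  by apply: zigzag_edge_disjoint => //; lia.
Qed.

Definition seq_labelling (w : seq (seq nat)) (k v : nat) : nat := nth 0 (nth [::] w k) v.

Definition dispersed_labellingb (G : graph) (K : nat) (w : seq (seq nat)) : bool :=
  let f := seq_labelling w in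
  [&& all (fun k => perm_eq (nth [::] w k) (iota 0 (gV G))) (iota 0 K),
      all2rel (fun k j => (k != j) ==>
        all (fun v => f k v != f j v) (iota 0 (gV G))) (iota 0 K) &
      all2rel (fun k j => (k != j) ==>
        allrel (fun e e' => ~~ upair_eq (f k e.1, f k e.2) (f j e'.1, f j e'.2))
               (gE G) (gE G)) (iota 0 K)].

Lemma dispersed_labellingb_sound G K w :
  dispersed_labellingb G K w -> dispersed_labelling G K (seq_labelling w).
Proof.
case/and3P=> /allP w_perm /allrelP w_disp /allrelP w_edge.
have mem_K k : k < K -> k \in iota 0 K by rewrite mem_iota.
have {}w_perm k : k < K -> perm_eq (nth [::] w k) (iota 0 (gV G)).
  by move/mem_K; apply: w_perm.
have size_w k : k < K -> size (nth [::] w k) = gV G.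
  by move=> /w_perm /perm_size ->; rewrite size_iota.
split=> [k v hk hv | k u v hk hu hv | k j v hk hj kj hv | k j e e' hk hj kj he he'].
- have /(mem_nth 0) : v < size (nth [::] w k) by rewrite size_w.
  by rewrite (perm_mem (w_perm k hk)) mem_iota.
- have uniq_w : uniq (nth [::] w k) by rewrite (perm_uniq (w_perm k hk)) iota_uniq.
  by move/eqP; rewrite nth_uniq ?size_w // => /eqP.
- have /implyP/(_ kj)/allP := w_disp k j (mem_K k hk) (mem_K j hj).
  by apply; rewrite mem_iota.
- by have /implyP/(_ kj)/allrelP := w_edge k j (mem_K k hk) (mem_K j hj); apply.
Qed.

Definition two_paths_labelling (l n : nat) : seq (seq nat) :=
  match l, n with
  | 1, 2 => [:: [:: 0; 1; 2; 3]; [:: 1; 0; 3; 2]; [:: 2; 3; 1; 0]; [:: 3; 2; 0; 1]]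
  | 2, 1 => [:: [:: 0; 1; 2; 3]; [:: 1; 2; 3; 0]; [:: 2; 3; 0; 1]; [:: 3; 0; 1; 2]]
  | 1, 3 => [:: [:: 0; 1; 2; 3; 4]; [:: 1; 2; 4; 0; 3]; [:: 2; 4; 3; 1; 0]; [:: 3; 0; 1; 4; 2]]
  | 2, 2 => [:: [:: 0; 1; 2; 3; 4]; [:: 1; 2; 4; 0; 3]; [:: 2; 4; 3; 1; 0]; [:: 3; 0; 1; 4; 2]]
  | 3, 1 => [:: [:: 0; 1; 2; 3; 4]; [:: 1; 3; 0; 4; 2]; [:: 2; 0; 4; 1; 3]; [:: 3; 4; 1; 2; 0]]
  | 1, 4 => [:: [:: 0; 1; 2; 3; 4; 5]; [:: 1; 0; 3; 5; 2; 4]; [:: 2; 3; 1; 4; 5; 0]; [:: 5; 2; 4; 0; 1; 3]]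
  | 2, 3 => [:: [:: 0; 1; 2; 3; 4; 5]; [:: 1; 2; 0; 4; 5; 3]; [:: 2; 4; 3; 5; 1; 0]; [:: 5; 0; 4; 1; 3; 2]]
  | 3, 2 => [:: [:: 0; 1; 2; 3; 4; 5]; [:: 1; 3; 0; 2; 5; 4]; [:: 2; 4; 1; 5; 0; 3]; [:: 3; 5; 4; 0; 2; 1]]
  | 4, 1 => [:: [:: 0; 1; 2; 3; 4; 5]; [:: 1; 3; 0; 2; 5; 4]; [:: 2; 4; 1; 5; 0; 3]; [:: 3; 5; 4; 0; 1; 2]]
  | 1, 5 => [:: [:: 0; 1; 2; 3; 4; 5; 6]; [:: 1; 0; 3; 5; 2; 6; 4]; [:: 2; 3; 1; 0; 6; 4; 5]; [:: 6; 2; 4; 1; 5; 0; 3]]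
  | 2, 4 => [:: [:: 0; 1; 2; 3; 4; 5; 6]; [:: 1; 2; 0; 4; 6; 3; 5]; [:: 2; 0; 3; 1; 5; 6; 4]; [:: 3; 5; 1; 6; 2; 4; 0]]
  | 3, 3 => [:: [:: 0; 1; 2; 3; 4; 5; 6]; [:: 1; 3; 0; 2; 5; 6; 4]; [:: 2; 0; 4; 1; 6; 3; 5]; [:: 3; 2; 6; 5; 1; 4; 0]]
  | 4, 2 => [:: [:: 0; 1; 2; 3; 4; 5; 6]; [:: 1; 3; 0; 2; 5; 6; 4]; [:: 2; 4; 1; 5; 6; 0; 3]; [:: 5; 2; 6; 1; 3; 4; 0]]
  | 5, 1 => [:: [:: 0; 1; 2; 3; 4; 5; 6]; [:: 1; 3; 0; 2; 5; 6; 4]; [:: 2; 4; 1; 5; 6; 0; 3]; [:: 3; 5; 4; 6; 0; 1; 2]]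
  | _, _ => [::]
  end.

Lemma two_paths_labelling_check :
  all (fun l => all (fun n => (3 <= l + n <= 6) ==>
    dispersed_labellingb (paths_plus_K1 [:: l; n]) 4 (two_paths_labelling l n))
    (iota 1 5)) (iota 1 5).
Proof. by vm_compute. Qed.

Lemma two_paths_K1_labelling l n : 0 < l -> 0 < n -> 3 <= l + n <= 6 ->
  dispersed_labelling (paths_plus_K1 [:: l; n]) 4 (seq_labelling (two_paths_labelling l n)).
Proof.
move=> l_pos n_pos ln_range; apply: dispersed_labellingb_sound.
have l_in : l \in iota 1 5 by rewrite mem_iota; lia.
have n_in : n \in iota 1 5 by rewrite mem_iota; lia.
by have /allP/(_ n n_in)/implyP/(_ ln_range) := allP two_paths_labelling_check l l_in.
Qed.

Theorem lemma2p7 (ls : seq nat) :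
  2 <= size ls -> all (fun l => 0 < l) ls -> 3 <= sumn ls ->
  exists phi : 'I_4 -> {perm 'I_(gV (paths_plus_K1 ls))},
    placement phi /\ dispersed phi.
Proof.
move=> size_ls pos_ls sum_ls; have [large | small] := leqP 7 (sumn ls).
  have path_lab := @zigzag_labelling (sumn ls).+1 4 large.
  apply: dispersed_placement_of_labelling (dispersed_labelling_sub _ _ path_lab).
    by rewrite gV_paths_plus_K1.
  by move=> e /paths_plus_K1_edge_sub; apply: path_graph_edge_sub.
case: ls size_ls pos_ls sum_ls small => [|l [|l' ls]] //= _ /and3P[l_pos l'_pos _].
move=> sum_ln small; have tail_pos : 0 < l' + sumn ls by rewrite addn_gt0 l'_pos.
have ln_range : 3 <= l + (l' + sumn ls) <= 6 by lia.
have two_paths_lab := two_paths_K1_labelling l_pos tail_pos ln_range.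
apply: (@dispersed_placement_of_labelling (paths_plus_K1 (l :: l' :: ls))).
apply: dispersed_labelling_sub two_paths_lab.
  by rewrite !gV_paths_plus_K1 /= addn0.
exact: paths_plus_K1_sub_two_paths.
Qed.
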